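(* For every integer $n\ge0$, $b(3n)$ is odd if $n=2k(3k+1)$ for some integer $k$ (in which case $b(3n)\equiv(-1)^k\pmod 2$), and $b(3n)\equiv 0\pmod 2$ otherwise.
   Context: $f_m:=(q^m;q^m)_\infty=\prod_{j\ge1}(1-q^{mj})$. The mock theta function $\mathcal{B}(q)=\sum_{n\ge0}\frac{q^n(-q;q^2)_n}{(q;q^2)_{n+1}}=\sum_{n\ge0}b(n)q^n$, where $(a;q)_n=\prod_{j=0}^{n-1}(1-aq^j)$. *)

(* Formal power series in q with integer coefficients,
   represented as coefficient functions nat -> int. *)
From mathcomp Require Import all_boot all_order all_algebra.
Set Implicit Arguments. Unset Strict Implicit. Unset Printing Implicit Defensive.
Import Order.TTheory GRing.Theory Num.Theory.
Local Open Scope ring_scope.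

Definition fps := nat -> int.

Definition fps_mul (f g : fps) : fps :=
  fun n => \sum_(i < n.+1) f i * g (n - i)%N.

Definition fps_one : fps := fun n => if n == 0%N then 1 else 0.

Definition fps_qpow (m : nat) : fps := fun n => if n == m then 1 else 0.

(* 1 - a q^m  (for m >= 1) *)
Definition fps_lin (a : int) (m : nat) : fps :=
  fun n => if n == 0%N then 1 else if n == m then - a else 0.

(* 1 / (1 - q^m) = sum_i q^(m i), for m >= 1 *)
Definition fps_geom (m : nat) : fps := fun n => if (m %| n)%N then 1 else 0.

Definition fps_prod (s : seq fps) : fps := foldr fps_mul fps_one s.

(* (-q;q^2)_n = prod_{j<n} (1 + q^{2j+1}) *)
Definition negq_q2 (n : nat) : fps :=
  fps_prod [seq fps_lin (-1) (2 * j).+1 | j <- iota 0 n].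

(* 1/(q;q^2)_{n+1} = prod_{j<=n} 1/(1 - q^{2j+1}) *)
Definition inv_q_q2 (n : nat) : fps :=
  fps_prod [seq fps_geom (2 * j).+1 | j <- iota 0 n.+1].

(* n-th summand  q^n (-q;q^2)_n / (q;q^2)_{n+1} *)
Definition B_term (n : nat) : fps :=
  fps_mul (fps_qpow n) (fps_mul (negq_q2 n) (inv_q_q2 n)).

(* b(N): coefficient of q^N in B(q); summands with n > N contribute 0 to
   the coefficient of q^N because of the factor q^n. *)
Definition b (N : nat) : int := \sum_(n < N.+1) B_term n N.

From mathcomp Require Import all_boot all_order all_algebra.
From mathcomp Require Import zify.
Import Order.TTheory GRing.Theory Num.Theory.
Set Implicit Arguments. Unset Strict Implicit.

(* Modulo 2 we have 1 + q^m = 1 - q^m, so in the n-th summand of B(q) all factors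
   cancel except q^n / (1 - q^(2n+1)).  Hence b(N) is congruent mod 2 to the number
   of n <= N with 2n+1 dividing N - n, i.e. to the number of divisors of 2N+1.
   Pairing each divisor d with (2N+1)/d shows that this number is odd exactly when
   2N+1 is a square, and 6n+1 = (2i+1)^2 happens exactly when n = 2k(3k+1). *)

Lemma odd_card_involution (T : finType) (P : pred T) (h : T -> T) :
  involutive h -> (forall x, P (h x) = P x) ->
  odd #|[pred x | P x]| = odd #|[pred x | P x && (h x == x)]|.
Proof.
move=> hK Ph.
have cardE (Q : pred T) : #|[pred x | Q x]| = (\sum_(x | Q x) 1)%N.
  by rewrite -sum1_card.
rewrite !cardE (bigID (fun x => h x == x)) /=.
set below := fun x => (enum_rank (h x) < enum_rank x)%N.
rewrite [X in (_ + X)%N](bigID below) /=.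
have -> : (\sum_(x | (P x && (h x != x)) && ~~ below x) 1 =
           \sum_(x | (P x && (h x != x)) && below x) 1)%N.
  rewrite (reindex_inj (inv_inj hK)) /=; apply: eq_bigl => x.
  rewrite /below hK Ph; case: (P x) => //=; rewrite eq_sym.
  by case: ltngtP => //= /val_inj/enum_rank_inj <-; rewrite eqxx.
by rewrite !oddD addbb addbF.
Qed.

Section OddDivisors.

Variable N : nat.
Let M := (2 * N).+1.

Definition codivisor_index (i : nat) := (M %/ (2 * i).+1)./2.

Lemma codivisor_indexK i :
  ((2 * i).+1 %| M)%N -> ((2 * codivisor_index i).+1 * (2 * i).+1 = M)%N.
Proof.
move=> dvd_iM; set q := (M %/ (2 * i).+1)%N.
have qiM : (q * (2 * i).+1 = M)%N by rewrite divnK.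
have odd_q : odd q.
  have : odd M by rewrite /M /= oddM.
  by rewrite -qiM oddM => /andP[].
rewrite /codivisor_index -/q -[in RHS]qiM -[in RHS](odd_double_half q) odd_q.
by rewrite add1n -mul2n.
Qed.

Lemma codivisor_index_le i : ((2 * i).+1 %| M)%N -> (codivisor_index i <= N)%N.
Proof. by move=> /codivisor_indexK; rewrite /M; nia. Qed.

Definition codivisor (i : 'I_N.+1) : 'I_N.+1 :=
  if ((2 * i).+1 %| M)%N then inord (codivisor_index i) else i.

Lemma val_codivisor (i : 'I_N.+1) :
  ((2 * i).+1 %| M)%N -> val (codivisor i) = codivisor_index i.
Proof. by move=> dvd_iM; rewrite /codivisor dvd_iM /= inordK // ltnS codivisor_index_le. Qed.

Lemma dvd_codivisor (i : 'I_N.+1) : ((2 * codivisor i).+1 %| M)%N = ((2 * i).+1 %| M)%N.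
Proof.
case dvd_iM: ((2 * i).+1 %| M)%N; last by rewrite /codivisor dvd_iM.
by rewrite val_codivisor // -(codivisor_indexK dvd_iM) dvdn_mulr.
Qed.

Lemma codivisorK : involutive codivisor.
Proof.
move=> i; case dvd_iM: ((2 * i).+1 %| M)%N; last by rewrite /codivisor !dvd_iM.
have dvd_jM := dvd_iM; rewrite -dvd_codivisor in dvd_jM.
apply: val_inj; move: (codivisor_indexK dvd_jM) (codivisor_indexK dvd_iM).
rewrite (val_codivisor dvd_jM) (val_codivisor dvd_iM) => codiv_jE codiv_iE.
by move: codiv_jE; rewrite -codiv_iE mulnC => /eqP; rewrite eqn_pmul2l // eqSS eqn_pmul2l // => /eqP.
Qed.

Lemma codivisor_fixed (i : 'I_N.+1) :
  ((2 * i).+1 %| M)%N && (codivisor i == i) = ((2 * i).+1 ^ 2 == M)%N.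
Proof.
case dvd_iM: ((2 * i).+1 %| M)%N => /=.
  have := codivisor_indexK dvd_iM; rewrite -(val_codivisor dvd_iM) => codivE.
  apply/eqP/eqP => [fix_i|sqM]; first by rewrite -codivE fix_i.
  apply: val_inj; move: codivE; rewrite -sqM => /eqP.
  by rewrite eqn_pmul2r // eqSS eqn_pmul2l // => /eqP.
by apply/esym/negbTE/eqP => sqM; move: dvd_iM; rewrite -sqM dvdn_mulr.
Qed.

Lemma odd_card_odd_divisors :
  odd #|[pred i : 'I_N.+1 | ((2 * i).+1 %| M)%N]| =
  [exists i : 'I_N.+1, (2 * i).+1 ^ 2 == M]%N.
Proof.
rewrite (odd_card_involution codivisorK dvd_codivisor).
rewrite (eq_card (B := [pred i : 'I_N.+1 | (2 * i).+1 ^ 2 == M]%N)); last first.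
  by move=> i; rewrite !inE codivisor_fixed.
case: existsP => [[i sqiM] | no_sq]; last first.
  by rewrite eq_card0 // => i; apply/negP => sq; apply: no_sq; exists i.
rewrite (eq_card1 (x := i)) // => j; rewrite !inE; apply/idP/eqP => [sqjM|->//].
move: sqiM sqjM => /eqP sqiM; rewrite -sqiM eqn_exp2r // eqSS eqn_pmul2l //.
by move/eqP/val_inj.
Qed.

End OddDivisors.

Local Open Scope ring_scope.

Section TruncatedReduction.

Variable N : nat.

Definition eq_upto (p q : {poly 'F_2}) := forall k, (k <= N)%N -> p`_k = q`_k.

(* [p] is the reduction of [f] modulo 2 and modulo q^(N+1). *)
Definition represents (p : {poly 'F_2}) (f : fps) :=
  forall k, (k <= N)%N -> p`_k = (f k)%:~R.

Lemma eq_upto_mul p p' q q' : eq_upto p p' -> eq_upto q q' -> eq_upto (p * q) (p' * q').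
Proof.
move=> pp' qq' k kN; rewrite !coefM; apply: eq_bigr => i _.
by rewrite pp' ?qq' ?(leq_trans _ kN) ?leq_subr ?(ltnSE (ltn_ord i)).
Qed.

Lemma eq_upto_prod (s : seq nat) (P Q : nat -> {poly 'F_2}) :
  (forall x, eq_upto (P x) (Q x)) -> eq_upto (\prod_(x <- s) P x) (\prod_(x <- s) Q x).
Proof.
move=> PQ; elim: s => [|x s IHs]; first by rewrite !big_nil.
by rewrite !big_cons; apply: eq_upto_mul.
Qed.

Lemma represents_eq_upto p q f : eq_upto p q -> represents q f -> represents p f.
Proof. by move=> pq qf k kN; rewrite pq // qf. Qed.

Lemma represents_mul p q f g :
  represents p f -> represents q g -> represents (p * q) (fps_mul f g).
Proof.
move=> pf qg k kN; rewrite coefM /fps_mul (big_morph _ (@intrD _) (mulr0z 1)).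
by apply: eq_bigr => i _; rewrite intrM pf ?qg ?(leq_trans _ kN) ?leq_subr ?(ltnSE (ltn_ord i)).
Qed.

Lemma represents_one : represents 1 fps_one.
Proof. by move=> k _; rewrite coef1 /fps_one; case: (k == 0%N). Qed.

Lemma represents_prod (s : seq nat) (P : nat -> {poly 'F_2}) (F : nat -> fps) :
  (forall x, represents (P x) (F x)) ->
  represents (\prod_(x <- s) P x) (fps_prod [seq F x | x <- s]).
Proof.
move=> PF; elim: s => [|x s IHs]; first by rewrite big_nil; exact: represents_one.
by rewrite big_cons; apply: represents_mul.
Qed.

Lemma represents_qpow m : represents 'X^m (fps_qpow m).
Proof. by move=> k _; rewrite coefXn /fps_qpow; case: (k == m). Qed.

Lemma represents_lin m : (0 < m)%N -> represents (1 + 'X^m) (fps_lin (-1) m).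
Proof.
move=> m_gt0 [|k] _; rewrite coefD coef1 coefXn /fps_lin /=.
  by rewrite eq_sym (negbTE (lt0n_neq0 m_gt0)) addr0.
by case: (k.+1 == m); rewrite add0r.
Qed.

Definition trunc_geom (m : nat) : {poly 'F_2} := \poly_(k < N.+1) (m %| k)%:R.

Lemma represents_geom m : represents (trunc_geom m) (fps_geom m).
Proof. by move=> k kN; rewrite coef_poly ltnS kN /fps_geom; case: (m %| k)%N. Qed.

Lemma trunc_geom_inverse m : (0 < m)%N -> eq_upto 1 ((1 + 'X^m) * trunc_geom m).
Proof.
move=> m_gt0 k kN; rewrite mulrDl mul1r coefD coefXnM coef1 !coef_poly ltnS kN.
case: ltnP => [km | mk].
  rewrite addr0; case: (posnP k) => [->|k_gt0]; first by rewrite dvdn0.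
  by rewrite gtnNdvd // (negbTE (lt0n_neq0 k_gt0)).
have k_neq0 : k != 0%N by rewrite -lt0n (leq_trans m_gt0 mk).
rewrite ltnS (leq_trans (leq_subr _ _) kN).
have -> : (m %| k)%N = (m %| k - m)%N by rewrite -{1}(subnK mk) dvdn_addl.
by rewrite (negbTE k_neq0) addrr_pchar2 // pchar_Fp.
Qed.

Lemma represents_B_term n : represents ('X^n * trunc_geom (2 * n).+1) (B_term n).
Proof.
set Q := 'X^n * ((\prod_(j <- iota 0 n) (1 + 'X^((2 * j).+1))) *
   (\prod_(j <- iota 0 n.+1) trunc_geom (2 * j).+1)).
apply: (@represents_eq_upto _ Q).
  apply: eq_upto_mul => //.
  rewrite -[n.+1]addn1 iotaD big_cat /= big_seq1 mulrA -big_split /=.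
  rewrite -{1}[trunc_geom _]mul1r; apply: eq_upto_mul => //.
  rewrite [X in eq_upto X _](_ : _ = \prod_(j <- iota 0 n) 1); last by rewrite big1.
  by apply: eq_upto_prod => j; apply: trunc_geom_inverse.
apply: represents_mul; first exact: represents_qpow.
apply: represents_mul; first by apply: represents_prod => j; apply: represents_lin.
by apply: represents_prod => j; apply: represents_geom.
Qed.

End TruncatedReduction.

Lemma natr_F2 m : (m%:R : 'F_2) = (odd m)%:R.
Proof. by apply: val_inj; rewrite /= !val_Fp_nat // modn2; case: (odd m). Qed.

Lemma intr_F2 (z : int) : (z%:~R : 'F_2) = (odd `|z|)%:R.
Proof.
rewrite -natr_F2; case: z => m; first by rewrite pmulrn.
by rewrite NegzE mulrNz pmulrn oppr_pchar2 // pchar_Fp.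
Qed.

Lemma dvdn_sub_double N i : (i <= N)%N ->
  ((2 * i).+1 %| N - i)%N = ((2 * i).+1 %| (2 * N).+1)%N.
Proof.
move=> iN; have -> : ((2 * N).+1 = 2 * (N - i) + (2 * i).+1)%N by lia.
by rewrite dvdn_addl // Gauss_dvdr // coprimen2 /= oddM.
Qed.

Lemma b_mod2 N :
  ((b N)%:~R : 'F_2) = #|[pred i : 'I_N.+1 | ((2 * i).+1 %| (2 * N).+1)%N]|%:R.
Proof.
rewrite /b (big_morph _ (@intrD _) (mulr0z 1)) -sum1_card natr_sum [RHS]big_mkcond /=.
apply: eq_bigr => i _; have iN : (i <= N)%N by rewrite -ltnS.
rewrite -(represents_B_term i (leqnn N)) coefXnM ltnNge iN coef_poly ltnS leq_subr.
by rewrite dvdn_sub_double // inE; case: ifP.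
Qed.

Lemma odd_b_square N :
  odd `|b N|%N <-> (exists i, (2 * i).+1 ^ 2 = (2 * N).+1)%N.
Proof.
have := b_mod2 N; rewrite intr_F2 [RHS]natr_F2 odd_card_odd_divisors.
have bool_F2_inj (c d : bool) : (c%:R : 'F_2) = d%:R -> c = d.
  by case: c; case: d => // /(congr1 val).
move=> /bool_F2_inj ->.
split=> [/existsP[i /eqP sq_i] | [i sq_i]]; first by exists i.
apply/existsP; have i_lt : (i < N.+1)%N by move: sq_i; rewrite -mulnn; nia.
by exists (Ordinal i_lt); apply/eqP.
Qed.

Lemma odd_square_6n1 n :
  (exists i, (2 * i).+1 ^ 2 = (2 * (3 * n)).+1)%N <->
  exists k : int, n%:Z = 2 * k * (3 * k + 1).
Proof.
split=> [[i] | [[m|m] nE]].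
- rewrite -mulnn => sq_i.
  have [r_lt3 iE] := (ltn_pmod i (isT : 0 < 3)%N, divn_eq i 3).
  move: sq_i; rewrite {}iE; set q := (i %/ 3)%N.
  case: (i %% 3)%N r_lt3 => [|[|[|r]]] // _ sq_i.
  + by exists q%:Z; nia.
  + nia. (* i = 1 mod 3 would make 3 divide (2i+1)^2 = 6n+1 *)
  + by exists (- (q.+1)%:Z); nia.
- by exists (3 * m)%N; rewrite -mulnn; nia.
- by exists (3 * m).+2; move: nE; rewrite NegzE -mulnn; nia.
Qed.

Lemma modz2_odd (x : int) : odd `|x|%N -> (x %% 2)%Z = 1.
Proof.
case: x => m /=; first by rewrite modz_nat modn2 => ->.
by rewrite modNz_nat // modn2 => /negbTE ->.
Qed.

Lemma eqz_mod2_odd (x y : int) : odd `|x|%N -> odd `|y|%N -> (x == y %[mod 2])%Z.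
Proof. by move=> /modz2_odd -> /modz2_odd ->. Qed.

Lemma odd_abs_sign (k : int) : odd `|(-1) ^ k : int|%N.
Proof. by rewrite expN1r abszX abszN1 exp1n. Qed.

Theorem mainTheorem2 (n : nat) :
  ((exists k : int, n%:Z = 2 * k * (3 * k + 1)) ->
     odd `|b (3 * n)|%N /\
     (forall k : int, n%:Z = 2 * k * (3 * k + 1) ->
        (b (3 * n) == (-1) ^ k %[mod 2])%Z)) /\
  (~ (exists k : int, n%:Z = 2 * k * (3 * k + 1)) ->
     (b (3 * n) == 0 %[mod 2])%Z).
Proof.
have odd_bE : odd `|b (3 * n)|%N <-> exists k : int, n%:Z = 2 * k * (3 * k + 1).
  by rewrite -odd_square_6n1 odd_b_square.
split=> [/odd_bE odd_b | no_k].
  by split=> // k _; apply: eqz_mod2_odd; last exact: odd_abs_sign.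
rewrite eqz_mod_dvd subr0 dvdzE dvdn2; apply/negP => /odd_bE; exact: no_k.
Qed.
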